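(* Let $k$ divide $n$ with $n/k>1$. Then the positive semidefinite biquadratic form $B_{\Phi^{(n,k)}}$ decomposes as a sum of positive semidefinite biquadratic forms: \[ B_{\Phi^{(n,k)}}=\sum_{d=1}^{k} F_{\sigma_k,d}+\sum_{\substack{1\le i<j\le n \\ i \not\equiv j \pmod{k}}}\left( x_i y_i -x_j y_j \right)^2 , \] where \[ F_{\sigma_k,d}=\left( \frac{n}{k}-2 \right)\sum_{i \equiv d \pmod{k}} x_i^2 y_i^2 -2 \sum_{\substack{1\le i<j\le n \\ i \equiv j\equiv d \pmod{k}}} x_iy_ix_jy_j +\sum_{i \equiv d \pmod{k}} x_{\sigma_k(i)}^2y_i^2 \qquad (d=1,\dots,k). \] Furthermore, each $F_{\sigma_k,d}$ is positive semidefinite and, after renaming $x_{d+ik}$ as $x_{i+1}$ and $y_{d+ik}$ as $y_{i+1}$, coincides with the biquadratic form $B_{\Phi^{(n/k,1)}}$.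
   Context: For $n\ge 3$ and $k=1,\dots,n-1$, let $\sigma_k:\{1,\dots,n\}\to\{1,\dots,n\}$ be the permutation $\sigma_k(i)=i+k \bmod n$. The Qi–Hou map $\Phi^{(n,k)}:M_n\to M_n$ is defined by $\Phi^{(n,k)}([a_{ij}])=\mathrm{diag}(b_1,\dots,b_n)-[a_{ij}]$ with $b_i=(n-1)a_{ii}+a_{\sigma_k(i),\sigma_k(i)}$; it is a positive linear map. Its associated biquadratic form, for $x=(x_1,\dots,x_n)^{\rm t},y=(y_1,\dots,y_n)^{\rm t}\in\mathbb R^n$, is \[ B_{\Phi^{(n,k)}}(x:y)=y^{\rm t}\,\Phi^{(n,k)}(xx^{\rm t})\,y=(n-2)\sum_{i=1}^n x_i^2 y_i^2+\sum_{i=1}^n x_{\sigma_k(i)}^2 y_i^2-2\sum_{1\le i<j\le n}x_iy_ix_jy_j , \] which is positive semidefinite since $\Phi^{(n,k)}$ is positive. (In particular $B_{\Phi^{(n/k,1)}}$ is the analogous form in $n/k$ pairs of variables with the cyclic shift $\sigma_1(j)=j+1 \bmod n/k$.) *)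

(* real scalars R : realType. Indices are 0-based ('I_n). *)
From HB Require Import structures.
From mathcomp Require Import all_boot all_order all_algebra.
From mathcomp Require Import reals.
Set Implicit Arguments. Unset Strict Implicit. Unset Printing Implicit Defensive.
Import Order.TTheory GRing.Theory Num.Theory.
Local Open Scope ring_scope.

Definition sigma (n k : nat) (i : 'I_n) : 'I_n :=
  Ordinal (ltn_pmod (i + k) (leq_ltn_trans (leq0n i) (ltn_ord i))).

Definition QiHou {R : realType} (n k : nat) (A : 'M[R]_n) : 'M[R]_n :=
  diag_mx (\row_(i < n) ((n.-1)%:R * A i i + A (sigma k i) (sigma k i))) - A.

Definition Bform {R : realType} (n k : nat) (x y : 'cV[R]_n) : R :=
  ((y^T *m QiHou k (x *m x^T) *m y) 0 0).

(* F_{sigma_k,d}, with d given 0-based (residue d in 0..k-1, i.e. paper's d+1) *)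
Definition Fform {R : realType} (n k d : nat) (x y : 'cV[R]_n) : R :=
  ((n %/ k)%N%:R - 2) * (\sum_(i < n | (i %% k == d)%N) x i 0 ^+ 2 * y i 0 ^+ 2)
  - 2 * (\sum_(i < n) \sum_(j < n | [&& (i < j)%N, (i %% k == d)%N & (j %% k == d)%N])
            x i 0 * y i 0 * x j 0 * y j 0)
  + \sum_(i < n | (i %% k == d)%N) x (sigma k i) 0 ^+ 2 * y i 0 ^+ 2.

(* entry of a column vector at a natural-number index (0 if out of range) *)
Definition vget {R : realType} (n : nat) (x : 'cV[R]_n) (i : nat) : R :=
  match insub i with Some j => x j 0 | None => 0 end.

Definition subvec {R : realType} (n k d : nat) (x : 'cV[R]_n) : 'cV[R]_(n %/ k) :=
  \col_(i < n %/ k) vget x (d + i * k)%N.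

From mathcomp Require Import all_boot all_order all_algebra.
From mathcomp Require Import reals ring lra zify.
Set Implicit Arguments. Unset Strict Implicit. Unset Printing Implicit Defensive.
Import Order.TTheory GRing.Theory Num.Theory.
Local Open Scope ring_scope.

(* Writing a_i = x_i y_i, the form of the Qi-Hou map for a shift s on m indices is
   B(x:y) = sum_i ((m-1) x_i^2 + x_(s i)^2) y_i^2 - (sum_i a_i)^2.
   Positivity: by a weighted Cauchy-Schwarz inequality it suffices that
   sum_i t_i / ((m-1) t_i + t_(s i)) <= 1 for t >= 0 and s a permutation.  With
   v_i = t_(s i) / ((m-1) t_i + t_(s i)) one has prod_i (1 - v_i) = (m-1)^m prod_i v_i
   because s permutes the factors t_i, whereas AM-GM applied to the v_j, j <> i, gives
   prod_i (1 - v_i) > (m-1)^m prod_i v_i as soon as sum_i v_i < 1; hence sum_i v_i >= 1.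
   Decomposition: by Lagrange's identity both B_(Phi(n,k)) and F_(sigma_k,d) equal
   (sum of (a_i - a_j)^2 over pairs) - sum a_i^2 + sum x_(sigma_k i)^2 y_i^2, the pairs
   being all pairs, resp. the pairs inside the residue class d; so the decomposition
   just splits the pairs according to whether i = j (mod k).  Restricted to one residue
   class, sigma_k is the cyclic shift of n/k indices, which gives F = B_(Phi(n/k,1)). *)

Section RealFieldInequalities.
Variable R : realFieldType.

Lemma mulr2_le_addr_of_sqr_le_mul (c p q : R) :
  0 <= p -> 0 <= q -> c ^+ 2 <= p * q -> 2 * c <= p + q.
Proof.
move=> p0 q0 cpq; have /Order.le_of_leif := leif_AGM2_scaled p q.
nra.
Qed.

Lemma sqr_sum_le_mul_sum (I : finType) (a w e : I -> R) :
  (forall i, 0 <= w i) -> (forall i, 0 <= e i) -> (forall i, a i ^+ 2 <= w i * e i) ->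
  (\sum_i a i) ^+ 2 <= (\sum_i w i) * (\sum_i e i).
Proof.
move=> w0 e0 awe.
have cross i j : 2 * (a i * a j) <= w i * e j + w j * e i.
  apply: mulr2_le_addr_of_sqr_le_mul; rewrite ?mulr_ge0 //.
  have -> : w i * e j * (w j * e i) = w i * e i * (w j * e j) by ring.
  by rewrite exprMn ler_pM ?sqr_ge0.
have : \sum_i \sum_j 2 * (a i * a j) <= \sum_i \sum_j (w i * e j + w j * e i).
  by apply: ler_sum => i _; apply: ler_sum => j _; apply: cross.
under eq_bigr do rewrite -mulr_sumr.
under [X in _ <= X]eq_bigr do rewrite big_split /=.
rewrite -mulr_sumr big_split /= [X in _ <= _ + X]exchange_big /=.
rewrite -!big_distrlr /= expr2 => h.
lra.
Qed.

Lemma AGM_prod_subr_gt (I : finType) (v : I -> R) (c := (#|I|.-1)%:R : R) :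
  (1 < #|I|)%N -> (forall i, 0 < v i) -> \sum_i v i < 1 ->
  c ^+ #|I| * \prod_i v i < \prod_i (1 - v i).
Proof.
move=> I2 v_gt0 sum_lt1; set N := #|I|.-1; set P := \prod_i v i.
have N_gt0 : (0 < N)%N by rewrite /N; lia.
have cardI : #|I| = N.+1 by rewrite /N; lia.
have v_ge0 i : 0 <= v i by rewrite ltW.
have P_gt0 : 0 < P by rewrite prodr_gt0.
have rest_lt i : \sum_(j | j != i) v j < 1 - v i.
  by move: sum_lt1; rewrite (bigD1 i) //=; lra.
have compl_gt0 i : 0 < 1 - v i.
  by apply: le_lt_trans (rest_lt i); rewrite sumr_ge0.
have one_out i : c ^+ N * P < (1 - v i) ^+ N * v i.
  have AGM : c ^+ N * \prod_(j | j != i) v j <= (\sum_(j | j != i) v j) ^+ N.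
    have := @leif_AGM_scaled R I (predC1 i) v (fun j _ => mulrn_wge0 _ (v_ge0 j)).
    move=> /Order.le_of_leif.
    by rewrite prodrMn_const cardC1 -/N -mulr_natl natrX.
  have rest_ltX : (\sum_(j | j != i) v j) ^+ N < (1 - v i) ^+ N.
    by rewrite ltrXn2r -?lt0n ?sumr_ge0.
  rewrite /P (bigD1 i) //= mulrCA [X in _ < X]mulrC ltr_pM2l //.
  exact: le_lt_trans AGM rest_ltX.
have /card_gt0P[i0 _] : (0 < #|I|)%N by lia.
have : \prod_(i : I) (c ^+ N * P) < \prod_i ((1 - v i) ^+ N * v i).
  apply: ltr_prod; first by apply/hasP; exists i0; rewrite ?mem_index_enum.
  by move=> i _; rewrite one_out mulr_ge0 ?exprn_ge0 ?ler0n ?ltW.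
rewrite prodr_const big_split /= prodrXl -/P cardI.
have -> : (c ^+ N * P) ^+ N.+1 = (c ^+ N.+1 * P) ^+ N * P.
  by rewrite !exprMn -!exprM mulnC exprSr mulrA.
rewrite ltr_pM2r // ltr_pXn2r // nnegrE ?mulr_ge0 ?exprn_ge0 ?ler0n ?ltW //.
exact: prodr_gt0.
Qed.

Lemma sum_div_shift_le1 (I : finType) (s : I -> I) (t : I -> R) (c := (#|I|.-1)%:R : R) :
  injective s -> (1 < #|I|)%N -> (forall i, 0 <= t i) ->
  \sum_i t i / (c * t i + t (s i)) <= 1.
Proof.
move=> s_inj I2 t_ge0; set N := #|I|.-1.
have c_gt0 : 0 < c by rewrite ltr0n /N; lia.
have term_le i : t i / (c * t i + t (s i)) <= c^-1.
  have [->|t_neq0] := eqVneq (t i) 0; first by rewrite mul0r invr_ge0 ltW.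
  have t_gt0 : 0 < t i by rewrite lt_def t_neq0 t_ge0.
  rewrite ler_pdivrMr ?ltr_wpDr ?mulr_gt0 // mulrDr mulrA mulVf ?gt_eqF // mul1r.
  by rewrite lerDl mulr_ge0 ?invr_ge0 ?(ltW c_gt0).
have [/existsP[j /eqP tj0]|] := boolP [exists j, t j == 0].
  rewrite (bigD1 j) //= tj0 mul0r add0r.
  apply: le_trans (ler_sum _ (fun i _ => term_le i)) _.
  by rewrite sumr_const cardC1 -/N -mulr_natr mulVf ?gt_eqF.
rewrite negb_exists => /forallP t_neq0.
have t_gt0 i : 0 < t i by rewrite lt_def t_neq0 t_ge0.
pose D i := c * t i + t (s i).
have D_gt0 i : 0 < D i by rewrite addr_gt0 ?mulr_gt0.
pose v i := t (s i) / D i.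
have compl_v i : 1 - v i = c * (t i / D i).
  by rewrite -(divff (lt0r_neq0 (D_gt0 i))) -mulrBl /D addrK mulrA.
have prod_compl_v : \prod_i (1 - v i) = c ^+ #|I| * \prod_i v i.
  rewrite (eq_bigr _ (fun i _ => compl_v i)) big_split prodr_const /=; congr (_ * _).
  by rewrite !prodf_div (reindex_inj s_inj).
have sum_v_ge1 : 1 <= \sum_i v i.
  rewrite leNgt; apply/negP.
  move/(AGM_prod_subr_gt I2 (fun i => divr_gt0 (t_gt0 _) (D_gt0 i))).
  by rewrite prod_compl_v ltxx.
rewrite (eq_bigr (fun i => c^-1 * (1 - v i))); last first.
  by move=> i _; rewrite compl_v mulKf ?gt_eqF.
rewrite -mulr_sumr sumrB sumr_const mulrC ler_pdivrMr // mul1r.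
have -> : #|I| = N.+1 by rewrite /N; lia.
rewrite -natr1; lra.
Qed.

End RealFieldInequalities.

Section PairSums.
Variables (R : realFieldType) (n : nat).

Lemma sum_split_diag (h : 'I_n -> 'I_n -> R) :
  \sum_i \sum_j h i j
  = \sum_(i < n) \sum_(j < n | (i < j)%N) (h i j + h j i) + \sum_i h i i.
Proof.
have row_split i : \sum_j h i j
    = \sum_(j < n | (i < j)%N) h i j + \sum_(j < n | (j < i)%N) h i j + h i i.
  rewrite (bigID (fun j : 'I_n => (i < j)%N)) /= [X in _ + X](bigD1 i) ?ltnn //=.
  rewrite [h i i + _]addrC addrA; congr (_ + _ + _); apply: eq_bigl => j.
  by rewrite -val_eqE /=; case: ltngtP.
under [in RHS]eq_bigr do rewrite big_split /=.
rewrite (eq_bigr _ (fun i _ => row_split i)) !big_split /=; congr (_ + _ + _).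
by rewrite (exchange_big_dep xpredT).
Qed.

Lemma sum_ltn_pairs_sym (P : pred 'I_n) (g : 'I_n -> 'I_n -> R) :
  (forall i j, g i j = g j i) ->
  (\sum_(i < n) \sum_(j < n | [&& (i < j)%N, P i & P j]) g i j) *+ 2 + \sum_(i | P i) g i i
  = \sum_(i | P i) \sum_(j | P j) g i j.
Proof.
move=> g_sym; pose h i j := if P i && P j then g i j else 0.
have := sum_split_diag h.
have -> : \sum_i \sum_j h i j = \sum_(i | P i) \sum_(j | P j) g i j.
  rewrite [RHS]big_mkcond; apply: eq_bigr => i _; rewrite /h.
  by case: (P i); [rewrite [RHS]big_mkcond | rewrite big1].
move=> ->; congr (_ + _); last by rewrite big_mkcond; apply: eq_bigr => i _; rewrite /h andbb.
rewrite -sumrMnl; apply: eq_bigr => i _; rewrite big_mkcond [RHS]big_mkcond -sumrMnl.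
apply: eq_bigr => j _.
rewrite /h [g j i]g_sym.
by case: (P i); case: (P j); case: (i < j)%N; rewrite /= ?mulr2n ?mul0rn ?addr0.
Qed.

Lemma sum_ltn_pairs_mul (P : pred 'I_n) (a : 'I_n -> R) :
  (\sum_(i < n) \sum_(j < n | [&& (i < j)%N, P i & P j]) a i * a j) *+ 2
  = (\sum_(i | P i) a i) ^+ 2 - \sum_(i | P i) a i ^+ 2.
Proof.
have := sum_ltn_pairs_sym P (fun i j => mulrC (a i) (a j)).
rewrite -big_distrlr /= -expr2.
under [X in _ + X]eq_bigr do rewrite -expr2.
by move<-; rewrite addrK.
Qed.

Lemma sum_ltn_pairs_sqr_sub (P : pred 'I_n) (a : 'I_n -> R) :
  \sum_(i < n) \sum_(j < n | [&& (i < j)%N, P i & P j]) (a i - a j) ^+ 2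
  = #|P|%:R * \sum_(i | P i) a i ^+ 2 - (\sum_(i | P i) a i) ^+ 2.
Proof.
have sym i j : (a i - a j) ^+ 2 = (a j - a i) ^+ 2 by rewrite -sqrrN opprB.
have := sum_ltn_pairs_sym P sym.
rewrite [X in _ + X = _]big1 ?addr0; last by move=> i _; rewrite subrr expr0n.
set A := \sum_(i | P i) a i; set S := \sum_(i | P i) a i ^+ 2; set c : R := #|P|%:R.
have row i : \sum_(j | P j) (a i - a j) ^+ 2 = a i ^+ 2 * c - 2 * a i * A + S.
  rewrite (eq_bigr (fun j => a i ^+ 2 * 1 - 2 * a i * a j + a j ^+ 2)); last first.
    by move=> j _; ring.
  by rewrite !big_split /= sumrN -!mulr_sumr sumr_const.
rewrite (eq_bigr _ (fun i _ => row i)) !big_split /= sumrN -!mulr_suml -mulr_sumr.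
rewrite sumr_const -mulr_natr -/A -/S -/c mulr2n; lra.
Qed.

End PairSums.

Section ResidueClasses.
Variables (R : nmodType) (n k : nat).
Hypothesis k_gt0 : (0 < k)%N.

Lemma sum_residue_classes (f : 'I_n -> R) :
  \sum_(d < k) \sum_(i < n | (i %% k == d)%N) f i = \sum_i f i.
Proof.
by rewrite [RHS](partition_big (fun i : 'I_n => Ordinal (ltn_pmod i k_gt0)) xpredT).
Qed.

Lemma sum_same_residue_pairs (g : 'I_n -> 'I_n -> R) :
  \sum_(i < n) \sum_(j < n | (i < j)%N && (i %% k == j %% k)%N) g i j
  = \sum_(d < k) \sum_(i < n) \sum_(j < n | [&& (i < j)%N, i %% k == d & j %% k == d]%N) g i j.
Proof.
rewrite -sum_residue_classes; apply: eq_bigr => d _; rewrite big_mkcond; apply: eq_bigr => i _.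
have [hd|hd] := eqVneq (i %% k)%N d.
  by rewrite hd; apply: eq_bigl => j; rewrite eq_sym.
by rewrite big_pred0 // => j; rewrite andbF.
Qed.

Lemma sum_residue_class_reindex (d : nat) (G : nat -> R) : (d < k)%N -> (k %| n)%N ->
  \sum_(i < n | (i %% k == d)%N) G i = \sum_(j < n %/ k) G (d + j * k)%N.
Proof.
move=> d_lt_k /divnK n_eq.
rewrite -(big_mkord (fun i => i %% k == d)%N) -(big_mkord xpredT (fun j => G (d + j * k)%N)).
rewrite -{1}n_eq.
elim: (n %/ k)%N => [|m IHm]; first by rewrite mul0n !big_geq.
rewrite mulSnr (@big_cat_nat _ _ _ (m * k)%N) ?leq_addr //= IHm big_nat_recr //=; congr (_ + _).
rewrite -{1}(add0n (m * k)%N) big_addn addKn big_mkord.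
rewrite (big_pred1 (Ordinal d_lt_k)) => [|i]; first by rewrite addnC.
by rewrite /= -val_eqE /= addnC modnMDl modn_small.
Qed.

End ResidueClasses.

Lemma residue_shift_mod (m k d j : nat) : (d < k)%N -> (j < m)%N ->
  ((d + j * k + k) %% (m * k) = d + (j.+1 %% m) * k)%N.
Proof.
move=> d_lt_k j_lt_m; have [j1_lt_m|] := ltnP j.+1 m.
  have : (j.+2 * k <= m * k)%N by rewrite leq_mul2r j1_lt_m orbT.
  by rewrite !mulSnr (modn_small j1_lt_m) => le_mk; rewrite modn_small; lia.
move=> m_le_j1; have -> : m = j.+1 by lia.
rewrite modnn mul0n addn0 -addnA -mulSnr modnDr modn_small //.
by rewrite (leq_trans d_lt_k) // leq_pmull.
Qed.

Section QiHouForm.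
Variable R : realType.

Lemma sigma_inj n k : injective (@sigma n k).
Proof.
move=> i j /(congr1 val) /= /eqP; rewrite eqn_modDr !modn_small // => /eqP.
exact: val_inj.
Qed.

Lemma BformE n k (x y : 'cV[R]_n) :
  Bform k x y = \sum_i ((n.-1)%:R * x i 0 ^+ 2 + x (sigma k i) 0 ^+ 2) * y i 0 ^+ 2
                - (\sum_i x i 0 * y i 0) ^+ 2.
Proof.
rewrite /Bform /QiHou mulmxBr mulmxBl mxE mul_mx_diag [X in _ + X]mxE; congr (_ - _).
  by rewrite mxE; apply: eq_bigr => i _; rewrite !mxE !big_ord1 !mxE; ring.
rewrite !mulmxA -mulmxA mxE big_ord1 !mxE expr2; congr (_ * _).
all: by apply: eq_bigr => i _; rewrite !mxE // mulrC.
Qed.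

Lemma Bform_ge0 n k (x y : 'cV[R]_n) : (1 < n)%N -> 0 <= Bform k x y.
Proof.
move=> n_gt1; rewrite BformE subr_ge0.
set c : R := (n.-1)%:R; pose D i := c * x i 0 ^+ 2 + x (sigma k i) 0 ^+ 2.
have c_gt0 : 0 < c by rewrite ltr0n; lia.
have D_ge0 i : 0 <= D i by rewrite addr_ge0 ?sqr_ge0 // mulr_ge0 ?sqr_ge0 // ltW.
have := sum_div_shift_le1 (@sigma_inj n k) _ (fun i => sqr_ge0 (x i 0)).
rewrite card_ord => /(_ n_gt1) ratio_le1.
apply: le_trans (sqr_sum_le_mul_sum (a := fun i => x i 0 * y i 0)
  (w := fun i => x i 0 ^+ 2 / D i) (e := fun i => D i * y i 0 ^+ 2) _ _ _) _.
- by move=> i; rewrite divr_ge0 ?sqr_ge0.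
- by move=> i; rewrite mulr_ge0 ?sqr_ge0.
- move=> i /=; have [Di0|Di_neq0] := eqVneq (D i) 0; last by rewrite mulrA divfK // exprMn.
  have xi0 : x i 0 ^+ 2 = 0.
    by move: Di0 (sqr_ge0 (x i 0)) (sqr_ge0 (x (sigma k i) 0)); rewrite /D; nra.
  by rewrite exprMn xi0 !mul0r.
- by rewrite ler_piMl ?sumr_ge0 // => i _; rewrite mulr_ge0 ?sqr_ge0.
Qed.

Lemma Bform_pairsE n k (x y : 'cV[R]_n) :
  Bform k x y = \sum_(i < n) \sum_(j < n | (i < j)%N) (x i 0 * y i 0 - x j 0 * y j 0) ^+ 2
                - \sum_i (x i 0 * y i 0) ^+ 2 + \sum_i x (sigma k i) 0 ^+ 2 * y i 0 ^+ 2.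
Proof.
have := sum_ltn_pairs_sqr_sub xpredT (fun i : 'I_n => x i 0 * y i 0).
rewrite (eq_bigr (fun i : 'I_n =>
    \sum_(j < n | (i < j)%N) (x i 0 * y i 0 - x j 0 * y j 0) ^+ 2)); last first.
  by move=> i _; apply: eq_bigl => j; rewrite !andbT.
move=> ->; rewrite BformE [#|_|]card_ord.
rewrite (eq_bigr (fun i =>
    (n.-1)%:R * (x i 0 * y i 0) ^+ 2 + x (sigma k i) 0 ^+ 2 * y i 0 ^+ 2)); last first.
  by move=> i _; ring.
rewrite big_split /= -mulr_sumr.
(* [n.-1] is truncated at [n = 0], where all sums are empty. *)
case: n x y => [|n] x y; first by rewrite !big_ord0; ring.
rewrite -natr1 /=; ring.
Qed.

Lemma FformE n k d (x y : 'cV[R]_n) :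
  Fform k d x y
  = \sum_(i < n | (i %% k == d)%N)
      (((n %/ k)%N%:R - 1) * (x i 0 * y i 0) ^+ 2 + x (sigma k i) 0 ^+ 2 * y i 0 ^+ 2)
    - (\sum_(i < n | (i %% k == d)%N) x i 0 * y i 0) ^+ 2.
Proof.
have := sum_ltn_pairs_mul (fun i : 'I_n => (i %% k == d)%N) (fun i => x i 0 * y i 0).
under eq_bigr do under eq_bigr do rewrite mulrA.
rewrite /Fform mulr_natl => ->.
rewrite big_split /= -mulr_sumr [X in (_ - 2) * X](eq_bigr (fun i => (x i 0 * y i 0) ^+ 2)).
  by ring.
by move=> i _; rewrite exprMn.
Qed.

Lemma Fform_pairsE n k (d : 'I_k) (x y : 'cV[R]_n) : (k %| n)%N ->
  Fform k d x y
  = \sum_(i < n) \sum_(j < n | [&& (i < j)%N, i %% k == d & j %% k == d]%N)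
        (x i 0 * y i 0 - x j 0 * y j 0) ^+ 2
    - \sum_(i < n | (i %% k == d)%N) (x i 0 * y i 0) ^+ 2
    + \sum_(i < n | (i %% k == d)%N) x (sigma k i) 0 ^+ 2 * y i 0 ^+ 2.
Proof.
move=> k_dvd_n.
have card_class : #|(fun i : 'I_n => (i %% k == d)%N)|%:R = (n %/ k)%N%:R :> R.
  have := sum_residue_class_reindex (fun _ => 1 : R) (ltn_ord d) k_dvd_n.
  by rewrite !sumr_const card_ord.
rewrite FformE (sum_ltn_pairs_sqr_sub (fun i : 'I_n => (i %% k == d)%N)) card_class.
by rewrite big_split /= -mulr_sumr; ring.
Qed.

Lemma vgetE n (z : 'cV[R]_n) (i : 'I_n) : vget z i = z i 0.
Proof. by rewrite /vget valK. Qed.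

Lemma Fform_subvec n k (d : 'I_k) (x y : 'cV[R]_n) : (k %| n)%N -> (0 < n %/ k)%N ->
  Fform k d x y = Bform 1 (subvec k d x) (subvec k d y).
Proof.
move=> k_dvd_n; set m := (n %/ k)%N => m_gt0.
have shift j : (j < m)%N -> ((d + j * k + k) %% n = d + (j.+1 %% m) * k)%N.
  by move=> j_lt_m; rewrite -{1}(divnK k_dvd_n) residue_shift_mod.
pose a i := vget x i * vget y i.
pose G i := (m%:R - 1) * a i ^+ 2 + vget x ((i + k) %% n) ^+ 2 * vget y i ^+ 2.
rewrite FformE (eq_bigr (fun i : 'I_n => G i)); last first.
  by move=> i _; rewrite /G /a !vgetE -[((i + k) %% n)%N]/(nat_of_ord (sigma k i)) vgetE.
rewrite [X in _ - X ^+ 2](eq_bigr (fun i : 'I_n => a i)); last by move=> i _; rewrite /a !vgetE.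
rewrite !(sum_residue_class_reindex _ (ltn_ord d) k_dvd_n) -/m BformE.
have -> : (m.-1)%:R = m%:R - 1 :> R by rewrite -(prednK m_gt0) -natr1 addrK.
congr (_ - _ ^+ 2); apply: eq_bigr => j _; rewrite !mxE //.
by rewrite /G /a shift //= addn1; ring.
Qed.

End QiHouForm.

Theorem proposition3 (R : realType) (n k : nat) :
  (2 < n)%N -> (0 < k)%N -> (k < n)%N -> (k %| n)%N -> (1 < n %/ k)%N ->
  [/\ (forall x y : 'cV[R]_n,
         Bform k x y =
         \sum_(d < k) Fform k d x y
         + \sum_(i < n) \sum_(j < n | (i < j)%N && (i %% k != j %% k)%N)
              (x i 0 * y i 0 - x j 0 * y j 0) ^+ 2),
      (forall (d : 'I_k) (x y : 'cV[R]_n), 0 <= Fform k d x y)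
    & (forall (d : 'I_k) (x y : 'cV[R]_n),
         Fform k d x y = Bform 1 (subvec k d x) (subvec k d y))].
Proof.
move=> _ k_gt0 _ k_dvd_n m_gt1.
have FformB d x y := Fform_subvec d x y k_dvd_n (ltnW m_gt1).
split; last 2 first.
- by move=> d x y; rewrite FformB Bform_ge0.
- exact: FformB.
move=> x y; under eq_bigr do rewrite Fform_pairsE //.
rewrite Bform_pairsE !big_split /= sumrN !sum_residue_classes //.
under eq_bigr => i _ do rewrite (bigID (fun j : 'I_n => i %% k == j %% k)%N) /=.
by rewrite big_split /= sum_same_residue_pairs //; ring.
Qed.
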